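(* Let $(\mathcal{S}^x,G)$ be a finite elation generalized quadrangle of order $(s,t)$ with $s>t$, and suppose $st$ is a power of the prime $p$. Let $a\in G\setminus\{\mathrm{id}\}$ be such that every point fixed by $a$ lies on some line $L_a$ through $x$, and suppose that $\alpha(a)$, where $\alpha(a)+1$ is the number of points of $L_a$ fixed by $a$, is a power of $p$. Let $f(a)$ be the number of lines not incident with $x$ fixed by $a$. Then: (i) $f(a)\neq 0$; (ii) if $f(a)$ is also a power of $p$, then $\alpha(a)/f(a)=(s/t)^{o(a)}$ for some even integer $o(a)$.
   Context: A finite generalized quadrangle (GQ) of order $(s,t)$: every line has $s+1$ points, every point is on $t+1$ lines, two points are on at most one common line, and for each point $p$ not on a line $L$ there is a unique point of $L$ collinear with $p$. An elation generalized quadrangle $(\mathcal{S}^x,G)$: $G\le\mathrm{Aut}(\mathcal{S})$ fixes every line through $x$ and acts sharply transitively on the points not collinear with $x$. *)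

From HB Require Import structures.
From mathcomp Require Import all_boot all_order all_algebra all_fingroup.
Set Implicit Arguments. Unset Strict Implicit. Unset Printing Implicit Defensive.

Definition collinear (P L : finType) (I : P -> L -> bool) (y z : P) : bool :=
  [exists l, I y l && I z l].

Definition is_GQ (P L : finType) (I : P -> L -> bool) (s t : nat) : Prop :=
  [/\ (forall l : L, #|[set y | I y l]| = s + 1),
      (forall y : P, #|[set l | I y l]| = t + 1),
      (forall y z : P, y != z -> #|[set l | I y l && I z l]| <= 1) &
      (forall (y : P) (l : L), ~~ I y l ->
          #|[set z | I z l && collinear I y z]| = 1)].

Definition is_automorphism (P L : finType) (I : P -> L -> bool)
  (g : {perm P} * {perm L}) : Prop :=
  forall (y : P) (l : L), I (g.1 y) (g.2 l) = I y l.

Definition is_elation_GQ (P L : finType) (I : P -> L -> bool) (x : P)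
  (G : {group ({perm P} * {perm L})}) : Prop :=
  [/\ (forall g, g \in G -> is_automorphism I g),
      (forall g l, g \in G -> I x l -> g.2 l = l) &
      (forall y z : P, ~~ collinear I x y -> ~~ collinear I x z ->
         exists! g, g \in G /\ g.1 y = z)].

Definition is_power_of (p n : nat) : Prop := exists k : nat, n = p ^ k.

From mathcomp Require Import all_boot all_order all_algebra all_fingroup.
From mathcomp Require Import algC algnum zify ring.
Set Implicit Arguments. Unset Strict Implicit. Unset Printing Implicit Defensive.
Import Order.TTheory GRing.Theory Num.Theory.

(* Benson's method.  Let [C] be the collinearity matrix of the quadrangle ([C y z]
   counts the lines through [y] and [z]); then [C^2 = (s + t) C + (t + 1) J], so
   [E = (C - c J) / (s + t)] with [c = (t + 1) / (s t + 1)] is an idempotent, and it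
   commutes with the permutation matrix [Q] of any automorphism [a].  Hence
   [(Q E)^(n + 1) = Q E] for [n] the order of [a]: the eigenvalues of [Q E] are [0]
   or roots of unity, and its trace [(\sum_y C (a y) y - (s + 1)(t + 1)) / (s + t)]
   is a rational algebraic integer.  For our [a], counting the points sent to a
   collinear point gives [\sum_y C (a y) y = (s + 1)(t + 1) + t alpha + s f], so
   [s + t] divides [t alpha + s f].  With [s = p^i], [t = p^j], [alpha = p^u] this
   reads [p^c + 1 | p^u + p^c f] for [c = i - j]; since [p^c = -1] modulo [p^c + 1],
   it forces [f <> 0] and, when [f = p^v], [u = v] modulo [2c], i.e.
   [alpha / f = (s / t)^o] with [o] even. *)

(** * Counting and number theory *)

Lemma card_set_sumb (T : finType) (c : pred T) : #|[set z | c z]| = \sum_z c z.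
Proof.
by rewrite -sum1_card big_mkcond /=; apply: eq_bigr => z _; rewrite inE; case: (c z).
Qed.

Lemma double_count (T U : finType) (A : {pred T}) (B : {pred U}) (R : T -> U -> bool) :
  \sum_(y in A) #|[set l in B | R y l]| = \sum_(l in B) #|[set y in A | R y l]|.
Proof.
have E (V : finType) (C : {pred V}) (c : pred V) :
    #|[set v in C | c v]| = \sum_(v in C) c v.
  by rewrite card_set_sumb [RHS]big_mkcond; apply: eq_bigr => v _; case: (v \in C).
by under eq_bigr do rewrite E; rewrite exchange_big; apply: eq_bigr => l _; rewrite E.
Qed.

Lemma sumn_delta (T : finType) (f : T -> nat) y : \sum_z (y == z) * f z = f y.
Proof.
rewrite (bigD1 y) //= eqxx mul1n big1 ?addn0 // => z /negPf.
by rewrite eq_sym => ->.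
Qed.

Lemma exp_add1_dvd_mod p c e : 1 < p -> 0 < c -> p ^ c + 1 %| 1 + p ^ e ->
  e %% c.*2 = c.
Proof.
move=> p1 c0 hd; set D := p ^ c + 1 in hd *.
have Xc : 0 < p ^ c by rewrite expn_gt0 ltnW.
have D1 : 1 < D by rewrite /D; lia.
(* [p ^ c = -1] modulo [D], so [p ^ e] only depends on [e] modulo [2c]. *)
have p2c : p ^ c.*2 %% D = 1.
  have -> : p ^ c.*2 = (p ^ c - 1) * D + 1.
    by rewrite -addnn expnD /D; set X := p ^ c; nia.
  by rewrite modnMDl modn_small.
have pe : p ^ e %% D = p ^ (e %% c.*2) %% D.
  rewrite {1}(divn_eq e c.*2) expnD (mulnC (e %/ c.*2)) expnM -modnMml -modnXm.
  by rewrite p2c exp1n (modn_small D1) mul1n.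
set r := e %% c.*2 in pe *.
have hr : D %| 1 + p ^ r by rewrite /dvdn -modnDmr -pe modnDmr.
have rlt : r < c.*2 by rewrite ltn_pmod // double_gt0.
clearbody r.
case: (ltnP r c) => hrc.
  have : p ^ r < p ^ c by rewrite ltn_exp2l.
  have := dvdn_leq (isT : 0 < 1 + p ^ r) hr; rewrite /D; lia.
have [r' er] : exists r', r = c + r' by exists (r - c); lia.
subst r; have r'c : r' < c by move: rlt; rewrite -addnn; lia.
have yl : p ^ r' < p ^ c by rewrite ltn_exp2l.
have : p ^ r' %% D = 1.
  have E1 : 1 + p ^ (c + r') + p ^ r' = p ^ r' * D + 1.
    by rewrite expnD /D; set X := p ^ c; set Y := p ^ r'; nia.
  have := congr1 (modn^~ D) E1; rewrite /= modnMDl (modn_small D1).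
  by rewrite -modnDml (eqP hr) add0n.
rewrite modn_small; last by rewrite /D; lia.
by move/eqP; rewrite -(expn0 p) eqn_exp2l // => /eqP->; rewrite addn0.
Qed.

Lemma exp_dvd_congruence p i j u f : 1 < p -> j < i ->
  p ^ i + p ^ j %| p ^ j * p ^ u + p ^ i * f ->
  f != 0 /\ (forall v, f = p ^ v -> u = v %[mod (i - j).*2]).
Proof.
move=> p1 ji; set c := i - j; set D := p ^ c + 1.
have c0 : 0 < c by rewrite subn_gt0.
have -> : p ^ i = p ^ j * p ^ c by rewrite -expnD subnKC // ltnW.
rewrite -{2}[p ^ j]muln1 -mulnDr -mulnA -mulnDr dvdn_pmul2l ?expn_gt0 ?(ltnW p1) //.
move=> hd; have D1 : 1 < D by rewrite /D addn1 ltnS expn_gt0 ltnW.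
have coD k : coprime D (p ^ k).
  apply: coprimeXr; rewrite -coprime_modl /D; case: (c) c0 => // c' _.
  by rewrite expnS mulnC modnMDl (modn_small p1) coprime1n.
split.
  apply/eqP => f0; move: hd; rewrite f0 muln0 addn0 -[p ^ u]muln1.
  by rewrite (Gauss_dvdr _ (coD u)) dvdn1 => /eqP D1'; rewrite D1' in D1.
move=> v fv; move: hd; rewrite fv -expnD => hd.
have modE a b q : a = q * c.*2 + b -> a = b %[mod c.*2] by move->; rewrite modnMDl.
case: (leqP u (c + v)) => h.
  rewrite -(subnKC h) expnD -{1}[p ^ u]muln1 -mulnDr (Gauss_dvdr _ (coD u)) in hd.
  have := divn_eq (c + v - u) c.*2; rewrite (exp_add1_dvd_mod p1 c0 hd).
  by move: (_ %/ _) => q e; apply/esym/(modE _ _ q); move: e h; rewrite -addnn; lia.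
have h' : c + v <= u by apply: ltnW.
rewrite -(subnKC h') expnD -[X in _ %| _ + X]muln1 -mulnDr in hd.
rewrite (Gauss_dvdr _ (coD _)) (addnC (p ^ _)) in hd.
have := divn_eq (u - (c + v)) c.*2; rewrite (exp_add1_dvd_mod p1 c0 hd).
by move: (_ %/ _) => q e; apply: (modE _ _ q.+1); move: e h; rewrite -addnn; lia.
Qed.

(** * Generalized quadrangles and their automorphisms *)

Section Quadrangle.
Variables (P L : finType) (I : P -> L -> bool) (s t : nat).
Hypothesis GQ : is_GQ I s t.

Local Notation col := (collinear I).

Lemma card_line_points l : #|[set y | I y l]| = s + 1.
Proof. by case: GQ. Qed.

Lemma card_point_lines y : #|[set l | I y l]| = t + 1.
Proof. by case: GQ. Qed.

Lemma common_line_uniq y z l m :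
  y != z -> I y l -> I z l -> I y m -> I z m -> l = m.
Proof.
move=> yz yl zl ym zm; case: GQ => _ _ /(_ _ _ yz) /card_le1P /(_ l) + _.
by rewrite inE yl zl => /(_ isT m); rewrite !inE ym zm => /esym/eqP.
Qed.

Lemma projection_uniq y l z1 z2 : ~~ I y l ->
  I z1 l -> col y z1 -> I z2 l -> col y z2 -> z1 = z2.
Proof.
move=> yl z1l c1 z2l c2; case: GQ => _ _ _ /(_ _ _ yl) /eqP.
rewrite eqn_leq => /andP[/card_le1P /(_ z1) + _].
by rewrite inE z1l c1 => /(_ isT z2); rewrite !inE z2l c2 => /esym/eqP.
Qed.

Lemma projection_exists y l : ~~ I y l -> exists z, I z l && col y z.
Proof.
move=> yl; case: GQ => _ _ _ /(_ _ _ yl) /eqP /cards1P [z Hz].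
by exists z; have := set11 z; rewrite -Hz inE.
Qed.

Lemma collinearP y z : reflect (exists l, I y l /\ I z l) (col y z).
Proof. by apply: (iffP existsP) => -[l H]; exists l; [case/andP: H|apply/andP]. Qed.

Lemma collinear_line y z l : I y l -> I z l -> col y z.
Proof. by move=> yl zl; apply/collinearP; exists l. Qed.

Lemma collinear_refl y : col y y.
Proof.
have : 0 < #|[set l | I y l]| by rewrite card_point_lines addn1.
by case/card_gt0P => l; rewrite inE => yl; exact: (collinear_line yl yl).
Qed.

Lemma collinear_sym y z : col y z = col z y.
Proof. by apply/collinearP/collinearP => -[l [? ?]]; exists l. Qed.

Lemma card_common_lines y z : z != y -> col y z -> #|[set l | I y l && I z l]| = 1.
Proof.
move=> zy /collinearP [l [yl zl]]; apply: (@eq_card1 _ l) => m.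
rewrite !inE; apply/idP/eqP => [/andP[ym zm]|->]; last by rewrite yl zl.
exact: esym (common_line_uniq zy zl yl zm ym).
Qed.

Definition neighbours y := [set z | (z != y) && col y z].

Lemma card_neighbours y : #|neighbours y| = s * (t + 1).
Proof.
have E : \sum_(z in neighbours y) #|[set l in [set l | I y l] | I z l]| =
         #|neighbours y|.
  rewrite -sum1_card; apply: eq_bigr => z; rewrite inE => /andP[zy c].
  by rewrite -(card_common_lines zy c); apply: eq_card => l; rewrite !inE.
rewrite -E double_count -[s * _]mulnC -[t + 1](card_point_lines y) -sum_nat_const.
apply: eq_bigr => l; rewrite inE => yl.
have -> : [set z in neighbours y | I z l] = [set z | I z l] :\ y.
  apply/setP => z; rewrite !inE; apply/andP/andP => [[/andP[]]|[zy zl]] //.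
  by rewrite zy (collinear_line yl zl).
by have := cardsD1 y [set z | I z l]; rewrite card_line_points inE yl; lia.
Qed.

Lemma card_common_neighbours_col y w : y != w -> col y w ->
  #|[set z | (z != y) && (z != w) && col y z && col z w]| = s - 1.
Proof.
move=> yw /collinearP [m [ym wm]].
have -> : [set z | (z != y) && (z != w) && col y z && col z w] =
          [set z | I z m] :\ y :\ w.
  apply/setP => z; rewrite !inE; apply/idP/idP.
    case/andP => /andP[/andP[-> ->] cy] cw /=; apply/negPn/negP => zm.
    move: yw; rewrite (projection_uniq zm ym _ wm) ?eqxx //.
    by rewrite collinear_sym.
  case/andP => zw /andP [zy zm]; rewrite zw zy /=.
  by rewrite (collinear_line ym zm) (collinear_line zm wm).
have := cardsD1 w ([set z | I z m] :\ y); rewrite !inE eq_sym yw wm /=.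
by have := cardsD1 y [set z | I z m]; rewrite !inE ym card_line_points; lia.
Qed.

Lemma card_common_neighbours_ncol y w : ~~ col y w ->
  #|[set z | col y z && col z w]| = t + 1.
Proof.
move=> nyw; set S := [set z | col y z && col z w].
have E : \sum_(z in S) #|[set l in [set l | I y l] | I z l]| = #|S|.
  rewrite -sum1_card; apply: eq_bigr => z; rewrite inE => /andP[c cw].
  have zy : z != y by apply: contraNneq nyw => <-.
  by rewrite -(card_common_lines zy c); apply: eq_card => l; rewrite !inE.
rewrite -E double_count -(card_point_lines y) -sum1_card.
apply: eq_bigr => l; rewrite inE => yl.
have wl : ~~ I w l by apply: contra nyw => wl; rewrite (collinear_line yl wl).
case: GQ => _ _ _ /(_ _ _ wl) <-; apply: eq_card => z; rewrite !inE.
apply/andP/andP => [[/andP[_ c] zl]|[zl c]]; first by rewrite collinear_sym.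
by rewrite (collinear_line yl zl) collinear_sym.
Qed.

Definition adj y z := (y != z) && col y z.

Definition collnum y z := #|[set l | I y l && I z l]|.

Lemma collnumE y z : collnum y z = adj y z + (t + 1) * (y == z).
Proof.
rewrite /collnum /adj; have [<-|yz] := eqVneq y z.
  rewrite muln1 -(card_point_lines y); apply: eq_card => l; by rewrite !inE andbb.
rewrite muln0 addn0; case: (boolP (col y z)) => [c|nc].
  by rewrite card_common_lines // eq_sym.
apply/eqP; rewrite cards_eq0; apply/eqP/setP => l; rewrite !inE.
by apply: contraNF nc => /andP[yl zl]; rewrite (collinear_line yl zl).
Qed.

Lemma collnum_sym y z : collnum y z = collnum z y.
Proof. by apply: eq_card => l; rewrite !inE andbC. Qed.

Lemma sum_collnum y : \sum_z collnum y z = (s + 1) * (t + 1).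
Proof.
transitivity (\sum_(z in predT) #|[set l in [set l | I y l] | I z l]|).
  by apply: eq_bigr => z _; apply: eq_card => l; rewrite !inE.
rewrite double_count -(card_point_lines y) mulnC -sum_nat_const.
apply: eq_bigr => l _; rewrite -(card_line_points l).
by apply: eq_card => z; rewrite !inE.
Qed.

Section Automorphism.
Variable a : {perm P} * {perm L}.
Hypothesis a_auto : is_automorphism I a.

Lemma auto_collinear y z : col (a.1 y) (a.1 z) = col y z.
Proof.
apply/collinearP/collinearP => -[l [yl zl]]; last by exists (a.2 l); rewrite !a_auto.
by exists ((a.2)^-1 l)%g; rewrite -(a_auto y) -(a_auto z) permKV.
Qed.

Lemma auto_collnum y z : collnum (a.1 y) (a.1 z) = collnum y z.
Proof. by rewrite !collnumE /adj auto_collinear (inj_eq perm_inj). Qed.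

Section FixedLine.
Variables (x : P) (La : L).
Hypotheses (a_fix_x : forall l, I x l -> a.2 l = l) (xLa : I x La)
  (fixLa : forall y, a.1 y = y -> I y La).

Lemma auto_collinear_x y : col x (a.1 y) = col x y.
Proof.
apply/collinearP/collinearP => -[l [xl yl]]; exists l; split => //.
  by rewrite -(a_auto y) a_fix_x.
by rewrite -(a_fix_x xl) a_auto.
Qed.

Definition perp_x := [set y | col x y].
Definition fixed_points := [set y | a.1 y == y].
Definition fixed_lines := [set l | ~~ I x l & a.2 l == l].
Definition moved_far := [set y | ~~ col x y & adj (a.1 y) y].

Lemma card_perp_x : #|perp_x| = 1 + s * (t + 1).
Proof.
rewrite (cardsD1 x) inE collinear_refl -(card_neighbours x); congr (_ + _).
by apply: eq_card => y; rewrite !inE andbC.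
Qed.

Lemma fixed_points_sub : fixed_points \subset perp_x.
Proof. by apply/subsetP => y; rewrite !inE => /eqP /fixLa; apply: collinear_line. Qed.

(* With [z] the point of [l] collinear with [x]: [a] fixes the line [x z], so
   [a z] lies on it and is collinear with [a y]; uniqueness of projections forces
   [a z = z], and then [l] and [a l] share the points [z] and [a y]. *)
Lemma moved_far_line y : y \in moved_far ->
  exists l, [/\ l \in fixed_lines, I y l & I (a.1 y) l].
Proof.
rewrite inE => /andP[nxy /andP[ayy /collinearP[l [ayl yl]]]].
have xl : ~~ I x l by apply: contra nxy => xl; apply: collinear_line xl yl.
exists l; split => //; rewrite inE xl /=; apply/eqP.
have [z /andP[zl /collinearP[N [xN zN]]]] := projection_exists xl.
have azN : I (a.1 z) N by rewrite -(a_fix_x xN) a_auto.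
have nxay : ~~ col x (a.1 y) by rewrite auto_collinear_x.
have [az|naz] := eqVneq (a.1 z) z.
  have zay : z != a.1 y by apply: contraNneq nxay => <-; apply: collinear_line xN zN.
  have zal : I z (a.2 l) by rewrite -{1}az a_auto.
  have ayal : I (a.1 y) (a.2 l) by rewrite a_auto.
  exact: common_line_uniq zay zal ayal zl ayl.
have ayN : ~~ I (a.1 y) N by apply: contra nxay => ayN; apply: collinear_line xN ayN.
case/eqP: naz; apply: (projection_uniq ayN azN _ zN (collinear_line ayl zl)).
by apply: (@collinear_line _ _ (a.2 l)); rewrite a_auto.
Qed.

Lemma card_moved_far : #|moved_far| = s * #|fixed_lines|.
Proof.
have E : \sum_(y in moved_far) #|[set l in fixed_lines | I y l]| = #|moved_far|.
  rewrite -sum1_card; apply: eq_bigr => y yY.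
  have [l [lF yl ayl]] := moved_far_line yY; apply: (@eq_card1 _ l) => m.
  rewrite !inE; apply/idP/eqP => [|->]; last by move: lF; rewrite inE => ->.
  case/andP => /andP [xm /eqP am] ym; move: yY; rewrite inE => /andP[_ /andP[ayy _]].
  by apply: (common_line_uniq ayy) => //; rewrite -am a_auto.
rewrite -E double_count mulnC -sum_nat_const.
apply: eq_bigr => l; rewrite inE => /andP[xl /eqP al].
have := cardsID perp_x [set y | I y l]; rewrite card_line_points.
have -> : #|[set y | I y l] :&: perp_x| = 1.
  by case: GQ => _ _ _ /(_ _ _ xl) <-; apply: eq_card => z; rewrite !inE collinear_sym.
have -> : [set y in moved_far | I y l] = [set y | I y l] :\: perp_x.
  apply/setP => y; rewrite !inE; apply/andP/andP => [[/andP[nxy _] yl]|[nxy yl]] //.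
  split => //; rewrite nxy /= /adj.
  have ayl : I (a.1 y) l by rewrite -{1}al a_auto.
  rewrite (collinear_line ayl yl) andbT.
  by apply: contra nxy => /eqP /fixLa /(collinear_line xLa).
lia.
Qed.

Lemma card_moved :
  #|[set y | adj (a.1 y) y]| = #|perp_x| - #|fixed_points| + s * #|fixed_lines|.
Proof.
rewrite -(cardsID perp_x) -card_moved_far.
have -> : [set y | adj (a.1 y) y] :&: perp_x = perp_x :\: fixed_points.
  apply/setP => y; rewrite !inE; case xy: (col x y); rewrite ?andbF ?andbT //=.
  have [l [xl yl]] := collinearP _ _ xy; rewrite /adj eq_sym.
  have ayl : I (a.1 y) l by rewrite -(a_fix_x xl) a_auto.
  by rewrite (collinear_line ayl yl) andbT.
have -> : [set y | adj (a.1 y) y] :\: perp_x = moved_far.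
  by apply/setP => y; rewrite !inE andbC.
by rewrite cardsD (setIidPr fixed_points_sub).
Qed.

Lemma sum_collnum_displacement : 0 < #|fixed_points| ->
  \sum_y collnum (a.1 y) y =
  (s + 1) * (t + 1) + (t * (#|fixed_points|).-1 + s * #|fixed_lines|).
Proof.
move=> fix_gt0; under eq_bigr do rewrite collnumE.
rewrite big_split /= -big_distrr /= -!card_set_sumb card_moved card_perp_x.
have := subset_leq_card fixed_points_sub; rewrite card_perp_x.
rewrite -/fixed_points; nia.
Qed.
End FixedLine.
End Automorphism.

Hypothesis s_gt0 : 0 < s.

Lemma sum_collnum_mul y w :
  \sum_z collnum y z * collnum z w = (s + t) * collnum y w + (t + 1).
Proof.
have E z : collnum y z * collnum z w =
    adj y z * adj z w + (t + 1) * ((y == z) * adj z w)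
    + (t + 1) * ((z == w) * adj y z) + (t + 1) * (t + 1) * ((y == z) * (z == w)).
  rewrite !collnumE; set a := adj y z; set b := adj z w.
  set c := nat_of_bool (y == z); set d := nat_of_bool (z == w); nia.
under eq_bigr do rewrite E.
rewrite !big_split /= -!big_distrr /= !sumn_delta.
have -> : \sum_z (z == w) * adj y z = adj y w.
  by rewrite -(sumn_delta (adj y) w); apply: eq_bigr => z _; rewrite eq_sym.
under eq_bigr do rewrite mulnb.
rewrite -card_set_sumb collnumE.
have [<-|yw] := eqVneq y w.
  have -> : [set z | adj y z && adj z y] = neighbours y.
    by apply/setP => z; rewrite !inE /adj eq_sym collinear_sym andbb.
  by rewrite card_neighbours /adj eqxx /=; nia.
case cyw: (col y w).
  have -> : [set z | adj y z && adj z w] =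
            [set z | (z != y) && (z != w) && col y z && col z w].
    apply/setP => z; rewrite !inE /adj eq_sym.
    by case: (z != y); case: (z != w); case: (col y z).
  by rewrite card_common_neighbours_col // /adj yw cyw /=; lia.
have -> : [set z | adj y z && adj z w] = [set z | col y z && col z w].
  apply/setP => z; rewrite !inE /adj.
  case cyz: (col y z); case czw: (col z w); rewrite ?andbF //= !andbT.
  by apply/andP; split; [apply: contraFneq cyw => -> | apply: contraFneq cyw => <-].
by rewrite card_common_neighbours_ncol ?cyw // /adj cyw (negPf yw) /=; lia.
Qed.

Lemma card_points (x : P) : #|P| = (s + 1) * (s * t + 1).
Proof.
have E : \sum_w \sum_z collnum x z * collnum z w =
         \sum_w ((s + t) * collnum x w + (t + 1)).
  by apply: eq_bigr => w _; apply: sum_collnum_mul.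
have Sq : \sum_w \sum_z collnum x z * collnum z w = ((s + 1) * (t + 1)) ^ 2.
  rewrite exchange_big /=; under eq_bigr do rewrite -big_distrr /= sum_collnum.
  by rewrite -big_distrl /= sum_collnum.
rewrite Sq big_split /= -big_distrr /= sum_collnum sum_nat_const -[#|xpredT|]/#|P| in E.
apply/eqP; rewrite -(eqn_pmul2l (ltn0Sn t)) -addn1; apply/eqP; nia.
Qed.
End Quadrangle.

Local Open Scope ring_scope.

(** * Matrices indexed by a finite type, and algebraic integers *)

Lemma ratio_exp_even (F : fieldType) (b : F) (c u v : nat) : b != 0 ->
  (u = v %[mod c.*2])%N -> exists o : int, (2 %| o)%Z /\ b ^+ u / b ^+ v = (b ^+ c) ^ o.
Proof.
move=> b0 uv.
have /dvdzP [q uvq] : (c.*2%:Z %| u%:Z - v%:Z)%Z.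
  by rewrite -eqz_mod_dvd /eq_op /= !modz_nat uv.
exists (q * 2); split; first exact: dvdz_mull.
rewrite [b ^+ c]exprnP exprz_exp.
have -> : c%:Z * (q * 2) = u%:Z - v%:Z by rewrite uvq; lia.
by rewrite expfzDr // -exprnN.
Qed.

Section FunMatrix.
Variables (R : pzSemiRingType) (T : finType).

Definition mx_of (f : T -> T -> R) : 'M[R]_#|T| :=
  \matrix_(i, j) f (enum_val i) (enum_val j).

Definition perm_mx_of (g : {perm T}) := mx_of (fun y z => (g y == z)%:R).

Lemma eq_mx_of f h : (forall y z, f y z = h y z) -> mx_of f = mx_of h.
Proof. by move=> fh; apply/matrixP => i j; rewrite !mxE fh. Qed.

Lemma mx_ofM f h : mx_of f * mx_of h = mx_of (fun y w => \sum_z f y z * h z w).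
Proof.
apply/matrixP => i j; rewrite !mxE (big_enum_val (A := T)) /=.
by apply: eq_bigr => k _; rewrite !mxE.
Qed.

Lemma mxtrace_mx_of f : \tr (mx_of f) = \sum_z f z z.
Proof.
by rewrite /mxtrace (big_enum_val (A := T)); apply: eq_bigr => k _; rewrite mxE.
Qed.

Lemma sum_delta (F : T -> R) y : \sum_z (y == z)%:R * F z = F y.
Proof.
rewrite (bigD1 y) //= eqxx mul1r big1 ?addr0 // => z /negPf.
by rewrite eq_sym => ->; rewrite mul0r.
Qed.

Lemma perm_mx_ofMl g f : perm_mx_of g * mx_of f = mx_of (fun y w => f (g y) w).
Proof. by rewrite mx_ofM; apply: eq_mx_of => y w; rewrite sum_delta. Qed.

Lemma perm_mx_ofMr g f : mx_of f * perm_mx_of g = mx_of (fun y w => f y (g^-1 w)%g).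
Proof.
rewrite mx_ofM; apply: eq_mx_of => y w; rewrite -(sum_delta (f y) (g^-1 w)%g).
apply: eq_bigr => z _; rewrite mulr_natr mulr_natl; congr (_ *+ nat_of_bool _).
by apply/eqP/eqP => [<-|<-]; rewrite ?permK ?permKV.
Qed.

Lemma perm_mx_of_comm (g : {perm T}) (f : T -> T -> R) :
  (forall y z, f (g y) (g z) = f y z) ->
  GRing.comm (perm_mx_of g) (mx_of f).
Proof.
move=> fg; rewrite /GRing.comm perm_mx_ofMl perm_mx_ofMr.
by apply: eq_mx_of => y w; rewrite -{1}[w](permKV g) fg.
Qed.

Lemma perm_mx_of1 : perm_mx_of 1 = 1.
Proof.
by apply/matrixP => i j; rewrite !mxE perm1 (inj_eq enum_val_inj); case: (i == j).
Qed.

Lemma perm_mx_ofX g k : perm_mx_of g ^+ k = perm_mx_of (g ^+ k).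
Proof.
elim: k => [|k IHk]; first by rewrite perm_mx_of1.
by rewrite exprSr IHk perm_mx_ofMl; apply: eq_mx_of => y w; rewrite expgSr permM.
Qed.

Lemma perm_mx_of_order g : perm_mx_of g ^+ #[g]%g = 1.
Proof. by rewrite perm_mx_ofX expg_order perm_mx_of1. Qed.
End FunMatrix.

Lemma commr_idem_periodic (R : pzSemiRingType) (q e : R) N :
  GRing.comm q e -> q ^+ N = 1 -> e * e = e -> (q * e) ^+ N.+1 = q * e.
Proof.
move=> qe qN ee; rewrite exprMn_comm // exprSr qN mul1r; congr (_ * _).
by elim: N {qN} => // N IHN; rewrite exprS IHN.
Qed.

Lemma eigenvalue_periodic_Aint n (A : 'M[algC]_n) N z :
  (0 < N)%N -> A ^+ N.+1 = A -> eigenvalue A z -> z \in Aint.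
Proof.
move=> N0 AN /eigenvalueP [v vA v0].
have vAk k : v *m A ^+ k = z ^+ k *: v.
  elim: k => [|k IHk]; first by rewrite expr0 mulmx1 scale1r.
  by rewrite exprSr mulmxA IHk -scalemxAl vA scalerA exprSr.
have /eqP := vAk N.+1; rewrite AN vA -subr_eq0 -scalerBl scaler_eq0 (negPf v0) orbF.
rewrite subr_eq0 => /eqP zN.
have [->|z0] := eqVneq z 0; first exact: Aint0.
apply: (Aint_unity_root N0); rewrite unity_rootE; apply/eqP.
by apply: (mulIf z0); rewrite mul1r -exprSr.
Qed.

Lemma mxtrace_Aint n (A : 'M[algC]_n) :
  (forall z, eigenvalue A z -> z \in Aint) -> \tr A \in Aint.
Proof.
case: n A => [|n] A Aint_eig; first by rewrite /mxtrace big_ord0 Aint0.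
have [r Ar] := closed_field_poly_normal (char_poly A).
rewrite (monicP (char_poly_monic A)) scale1r in Ar.
have sz : size r = n.+1 by have := size_char_poly A; rewrite Ar size_prod_XsubC => -[].
have -> : \tr A = \sum_(z <- r) z.
  by apply: oppr_inj; rewrite -char_poly_trace // Ar -coefPn_prod_XsubC ?sz.
rewrite big_seq; apply: rpred_sum => z zr; apply: Aint_eig.
by rewrite eigenvalue_root_char Ar root_prod_XsubC.
Qed.

(** * Benson's congruence *)

Section Benson.
Variables (P L : finType) (I : P -> L -> bool) (s t : nat) (x : P).
Variable a : {perm P} * {perm L}.
Hypotheses (GQ : is_GQ I s t) (s_gt0 : (0 < s)%N) (a_auto : is_automorphism I a).

Local Notation collnum := (collnum I).
Local Notation Q := (@perm_mx_of algC P a.1).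

(* The projection onto the [(s + t)]-eigenspace of the collinearity matrix; the
   constant term is what makes it vanish on the all-one vector. *)
Definition proj_kernel y w : algC :=
  (s + t)%:R^-1 * ((collnum y w)%:R - (t + 1)%:R / (s * t + 1)%:R).

Lemma proj_kernel_idem y w :
  \sum_z proj_kernel y z * proj_kernel z w = proj_kernel y w.
Proof.
set m : algC := (s + t)%:R; set c : algC := (t + 1)%:R / (s * t + 1)%:R.
have row z0 : \sum_z (collnum z0 z)%:R = ((s + 1) * (t + 1))%:R :> algC.
  by rewrite -natr_sum (sum_collnum GQ).
have col z0 : \sum_z (collnum z z0)%:R = ((s + 1) * (t + 1))%:R :> algC.
  by rewrite -(row z0); apply: eq_bigr => z _; rewrite collnum_sym.
have sq : \sum_z (collnum y z)%:R * (collnum z w)%:R =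
          m * (collnum y w)%:R + (t + 1)%:R :> algC.
  under eq_bigr do rewrite -natrM.
  by rewrite -natr_sum (sum_collnum_mul GQ s_gt0) natrD natrM.
have E z : proj_kernel y z * proj_kernel z w =
    m^-1 * m^-1 * ((collnum y z)%:R * (collnum z w)%:R - c * (collnum y z)%:R
                   - c * (collnum z w)%:R + c * c).
  by rewrite /proj_kernel -/m -/c; ring.
under eq_bigr do rewrite E.
rewrite -mulr_sumr !big_split /= !sumrN -!mulr_sumr sq row col sumr_const.
rewrite -[#|xpredT|]/#|P| (card_points GQ s_gt0 y) /proj_kernel -/m -/c /c /m.
have m0 : (s + t)%:R != 0 :> algC by rewrite pnatr_eq0 -lt0n addn_gt0 s_gt0.
have st0 : (s * t + 1)%:R != 0 :> algC by rewrite pnatr_eq0 addn1.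
move: m0 st0; rewrite !natrD !natrM => m0 st0.
by field; rewrite m0 st0.
Qed.

Definition proj_mx := mx_of proj_kernel.

Lemma proj_mx_idem : proj_mx * proj_mx = proj_mx.
Proof. by rewrite mx_ofM; apply: eq_mx_of; apply: proj_kernel_idem. Qed.

Lemma proj_mx_comm : GRing.comm Q proj_mx.
Proof.
by apply: perm_mx_of_comm => y z; rewrite /proj_kernel (auto_collnum GQ a_auto).
Qed.

Lemma mxtrace_perm_proj : \tr (Q * proj_mx) =
  (s + t)%:R^-1 * ((\sum_y collnum (a.1 y) y)%:R - ((s + 1) * (t + 1))%:R).
Proof.
rewrite perm_mx_ofMl mxtrace_mx_of /proj_kernel -mulr_sumr sumrB sumr_const natr_sum.
rewrite -[#|xpredT|]/#|P| (card_points GQ s_gt0 x) -mulr_natr; congr (_ * (_ - _)).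
have : (s * t + 1)%:R != 0 :> algC by rewrite pnatr_eq0 addn1.
by rewrite !natrD !natrM => st0; field.
Qed.

Theorem benson_congruence :
  (\sum_y collnum (a.1 y) y = (s + 1) * (t + 1) %[mod s + t])%N.
Proof.
have trA : \tr (Q * proj_mx) \in Aint.
  apply: mxtrace_Aint => z; apply: (eigenvalue_periodic_Aint (order_gt0 a.1)).
  exact: commr_idem_periodic proj_mx_comm (perm_mx_of_order algC a.1) proj_mx_idem.
have trQ : \tr (Q * proj_mx) \in Crat.
  by rewrite mxtrace_perm_proj rpredM ?rpredV ?rpredB ?rpred_nat.
have /intrP [k] := Cint_rat_Aint trQ trA; rewrite mxtrace_perm_proj.
have m0 : (s + t)%:R != 0 :> algC by rewrite pnatr_eq0 -lt0n addn_gt0 s_gt0.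
move/(canRL (mulVKf m0)); rewrite !pmulrn -rmorphB -rmorphM => /intr_inj Kk.
apply/eqP; rewrite -eqz_nat -!modz_nat eqz_mod_dvd Kk.
exact: dvdz_mulr.
Qed.
End Benson.

Theorem mainTheorem10 (P L : finType) (I : P -> L -> bool) (s t : nat) (x : P)
  (G : {group ({perm P} * {perm L})}) (p : nat)
  (a : {perm P} * {perm L}) (La : L) :
  is_GQ I s t -> is_elation_GQ I x G -> (t < s)%N ->
  prime p -> is_power_of p (s * t) ->
  a \in G -> a != 1%g ->
  I x La -> (forall y : P, a.1 y = y -> I y La) ->
  let alpha := (#|[set y | I y La & a.1 y == y]|).-1 in
  let f := #|[set l | ~~ I x l & a.2 l == l]| in
  is_power_of p alpha ->
  f <> 0%N /\
  (is_power_of p f ->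
     exists o : int, (2 %| o)%Z /\
       (alpha%:R / f%:R : rat) = ((s%:R / t%:R : rat) ^ o)).
Proof.
move=> GQ [auto_G fix_G _] ts pp [k st_pk] aG _ xLa fixLa alpha f [u alpha_pu].
have p1 := prime_gt1 pp.
have [i _ si] : exists2 i, (i <= k)%N & s = (p ^ i)%N.
  by apply/dvdn_pfactor => //; rewrite -st_pk dvdn_mulr.
have [j _ tj] : exists2 j, (j <= k)%N & t = (p ^ j)%N.
  by apply/dvdn_pfactor => //; rewrite -st_pk dvdn_mull.
have ji : (j < i)%N by rewrite -(ltn_exp2l _ _ p1) -si -tj.
have s_gt0 : (0 < s)%N by rewrite si expn_gt0 ltnW.
have a_auto := auto_G a aG; have a_fix_x l := fix_G a l aG.
have alphaE : alpha = (#|fixed_points a|).-1.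
  rewrite /alpha; congr _.-1; apply: eq_card => y.
  by rewrite !inE andb_idl // => /eqP /fixLa.
have fix_gt0 : (0 < #|fixed_points a|)%N.
  have : (0 < p ^ u)%N by rewrite expn_gt0 ltnW.
  by rewrite -alpha_pu alphaE; lia.
have := benson_congruence x GQ s_gt0 a_auto.
rewrite (sum_collnum_displacement GQ a_auto a_fix_x xLa fixLa fix_gt0).
rewrite -[X in _ = X %[mod _]]addn0 => /eqP; rewrite eqn_modDl mod0n.
rewrite -alphaE alpha_pu si tj.
case/(exp_dvd_congruence p1 ji) => f_neq0 f_cong; split; first exact/eqP.
case=> v fv; rewrite fv !natrX -(expfB _ ji).
apply: ratio_exp_even; first by rewrite pnatr_eq0 -lt0n ltnW.
exact: f_cong.
Qed.
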